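(* Let $\gamma$ be a regularly varying function near $0$ with index $\alpha\in(0,1]$. Then there exist constants $\mathsf{c}>0$ and $x_0\in(0,1)$ such that $$\int_0^{1/2}\gamma(xy)\frac{dy}{y\sqrt{\log(1/y)}}\le \mathsf{c}\,\gamma(x)\quad\text{for all }x\in[0,x_0].$$
   Context: $\gamma$ is a continuous increasing function near $0$ with $\lim_{x\downarrow0}\gamma(x)=0$. $\gamma$ is regularly varying near $0$ with index $\alpha$ if $\gamma(x)=x^\alpha L(x)$ for all $x\in(0,x_0)$ for some $x_0>0$, where $L:(0,x_0)\to[0,\infty)$ is slowly varying at $0$ in the sense of Karamata, i.e. $L(\lambda x)/L(x)\to1$ as $x\downarrow0$ for every $\lambda>0$. *)

From HB Require Import structures.
From mathcomp Require Import all_boot all_order all_algebra.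
From mathcomp Require Import all_classical all_reals all_analysis.
Set Implicit Arguments. Unset Strict Implicit. Unset Printing Implicit Defensive.
Import Order.TTheory GRing.Theory Num.Theory.
Import numFieldNormedType.Exports.
Local Open Scope classical_set_scope.
Local Open Scope ring_scope.

Definition slowly_varying_at0 (R : realType) (x0 : R) (L : R -> R) : Prop :=
  (forall x, 0 < x < x0 -> 0 <= L x) /\
  (forall lam : R, 0 < lam -> (fun x => L (lam * x) / L x) @ 0^'+ --> (1:R)).

Definition regularly_varying_at0 (R : realType) (gamma : R -> R) (alpha : R) : Prop :=
  exists x0 : R, 0 < x0 /\ exists L : R -> R,
    slowly_varying_at0 x0 L /\ (forall x, 0 < x < x0 -> gamma x = x `^ alpha * L x).

Definition admissible_near0 (R : realType) (gamma : R -> R) : Prop :=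
  exists d : R, 0 < d /\
    (forall x, 0 < x < d -> {for x, continuous gamma}) /\
    (forall x y, 0 <= x -> x <= y -> y < d -> gamma x <= gamma y) /\
    gamma x @[x --> 0^'+] --> (0:R) /\
    gamma 0 = 0.

From HB Require Import structures.
From mathcomp Require Import all_boot all_order all_algebra.
From mathcomp Require Import all_classical all_reals all_analysis measurable_realfun.
From mathcomp Require Import ring lra.
Set Implicit Arguments. Unset Strict Implicit. Unset Printing Implicit Defensive.
Import Order.TTheory GRing.Theory Num.Theory.
Import numFieldNormedType.Exports.
Local Open Scope classical_set_scope.
Local Open Scope ring_scope.

(* Fix h in (0, 1).  Since L (h z) / L z -> 1, regular variation with index
   alpha > 0 yields q < 1 with gamma (z h) <= q gamma z for small z (any q
   strictly between h^alpha and 1 works).  Cut ]0, h[ into the pieces [h^(k+2), h^(k+1)[.  On the k-th piece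
   monotonicity and the contraction give gamma (x y) <= q^k gamma x, the kernel
   1 / (y sqrt (ln (1/y))) is at most 1 / (h^(k+2) sqrt (ln (1/h))), and the
   piece has length h^(k+1) (1 - h).  The integral is thus dominated by a
   geometric series in q, of sum (1 - h) gamma x / (h sqrt (ln (1/h)) (1 - q)). *)

Lemma regularly_varying_contraction (R : realType) (gamma : R -> R) (alpha h : R) :
  0 < alpha -> 0 < h < 1 -> regularly_varying_at0 gamma alpha ->
  exists q e : R, [/\ 0 < q < 1, 0 < e &
    forall z, 0 < z < e -> gamma (z * h) <= q * gamma z].
Proof.
move=> alpha0 /andP[h0 h1] [x1 [x10 [L [[L_ge0 L_slow] gammaE]]]].
set p := h `^ alpha.
have p0 : 0 < p := powR_gt0 _ h0.
have p1 : p < 1.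
  have := @gt0_ltr_powR R alpha alpha0 h 1.
  by rewrite !nnegrE ltW // ler01 powR1 => /(_ isT isT h1).
(* q := (1 + p) / 2 = p * r, where the slack r > 1 absorbs L (h z) / L z *)
set r := (1 + p) / (2 * p).
have r1 : 1 < r by rewrite /r ltr_pdivlMr ?mulr_gt0 // mul1r; lra.
have : \forall t \near 0^'+, 0 < L (h * t) / L t < r.
  near=> t; apply/andP; split; near: t.
  - exact: cvgr_gt _ (L_slow h h0) _ ltr01.
  - exact: cvgr_lt _ (L_slow h h0) _ r1.
move=> /nbhs_ballP[e' /= e'0 ratio_near].
exists ((1 + p) / 2), (Num.min e' x1); split; first by apply/andP; split; lra.
  by rewrite lt_min e'0 x10.
move=> z /andP[z0]; rewrite lt_min => /andP[ze' zx1].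
have /andP[ratio_gt0 ratio_lt] : 0 < L (h * z) / L z < r.
  by apply: ratio_near => //; rewrite /ball /= sub0r normrN ger0_norm ?(ltW z0).
have Lz_gt0 : 0 < L z.
  rewrite lt_neqAle eq_sym L_ge0 ?z0 // andbT.
  by apply: contraTneq ratio_gt0 => ->; rewrite invr0 mulr0 ltxx.
rewrite ltr_pdivrMr // in ratio_lt.
have zh_lt_z : z * h < z by rewrite gtr_pMr.
rewrite gammaE ?mulr_gt0 ?(lt_trans zh_lt_z) // gammaE ?z0 //.
rewrite powRM ?(ltW z0) ?(ltW h0) // -/p (mulrC z h).
rewrite (_ : (1 + p) / 2 = p * r); last by rewrite /r; field; rewrite gt_eqF.
rewrite (_ : p * r * _ = z `^ alpha * p * (r * L z)); last by ring.
by rewrite ler_wpM2l ?mulr_ge0 ?powR_ge0 ?(ltW p0) ?(ltW ratio_lt).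
Unshelve. all: by end_near.
Qed.

Lemma contraction_iter (R : realType) (gamma : R -> R) (e q h : R) :
  0 <= q -> 0 < h <= 1 ->
  (forall z, 0 < z < e -> gamma (z * h) <= q * gamma z) ->
  forall k z, 0 < z < e -> gamma (z * h ^+ k) <= q ^+ k * gamma z.
Proof.
move=> q0 /andP[h0 h1] contraction; elim=> [|k IHk] z /andP[z0 ze].
  by rewrite !expr0 mulr1 mul1r.
have zhk_in : 0 < z * h ^+ k < e.
  rewrite mulr_gt0 ?exprn_gt0 //= (le_lt_trans _ ze) //.
  by rewrite ler_piMr ?(ltW z0) // exprn_ile1 ?(ltW h0).
rewrite exprSr mulrA (le_trans (contraction _ zhk_in)) //.
by rewrite exprSr (mulrC _ q) -mulrA ler_wpM2l // IHk ?z0.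
Qed.

Lemma nneseries_geometric_le (R : realType) (a q : R) : 0 <= a -> 0 < q < 1 ->
  (\sum_(k <oo) ((a * q ^+ k)%:E) <= (a * (1 - q)^-1)%:E)%E.
Proof.
move=> a0 /andP[q0 q1].
apply: lime_le.
  by apply: is_cvg_nneseries => n _ _; rewrite lee_fin mulr_ge0 ?exprn_ge0 ?(ltW q0).
near=> n; rewrite sumEFin lee_fin.
by apply: geometric_le_lim; rewrite ?ger0_norm ?(ltW q0).
Unshelve. all: by end_near.
Qed.

Section geometric_pieces.
Variables (R : realType) (h : R).
Hypotheses (h0 : 0 < h) (h1 : h < 1).

Definition geometric_piece (k : nat) : set R := `[h ^+ k.+2, h ^+ k.+1[%classic.

Let expr_gt0 k : 0 < h ^+ k. Proof. exact: exprn_gt0. Qed.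

Let expr_le {m n : nat} : (m <= n)%N -> h ^+ n <= h ^+ m.
Proof. by move=> mn; apply: (ler_wiXn2l (ltW h0) (ltW h1)). Qed.

Lemma geometric_piece_trivIset : trivIset setT geometric_piece.
Proof.
move=> i j _ _ [y []]; rewrite /geometric_piece /= !in_itv /=.
move=> /andP[hi_le hi_lt] /andP[hj_le hj_lt].
apply/eqP; rewrite eqn_leq; apply/andP; split; rewrite leqNgt; apply/negP => lt_ji.
- by have := lt_le_trans hi_lt (le_trans (@expr_le j.+2 i.+1 lt_ji) hj_le); rewrite ltxx.
- by have := lt_le_trans hj_lt (le_trans (@expr_le i.+2 j.+1 lt_ji) hi_le); rewrite ltxx.
Qed.

Lemma bigcup_geometric_piece : \bigcup_k geometric_piece k = `]0, h[%classic.
Proof.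
apply/seteqP; split => y /=.
  move=> [k _]; rewrite /geometric_piece /= !in_itv /= => /andP[lo hi].
  by rewrite (lt_le_trans (expr_gt0 _) lo) (lt_le_trans hi) // -{2}(expr1 h) expr_le.
rewrite in_itv /= => /andP[y0 yh].
have [N _ hN_lt] : \forall n \near \oo, h ^+ n < y.
  by apply: (cvgr_lt _ (cvg_expr _) _ y0); rewrite ger0_norm ?(ltW h0).
have below_y : exists n, h ^+ n.+2 <= y by exists N; exact/ltW/hN_lt/leqW/leqnSn.
(* the least such n places y in the n-th piece *)
case: (ex_minnP below_y) => n lo n_min; exists n => //.
rewrite /geometric_piece /= in_itv /= lo /=.
case: n lo n_min => [|n] _ n_min; first by rewrite expr1.
by rewrite ltNge; apply/negP => /n_min; rewrite ltnn.
Qed.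

Lemma geometric_piece_sub k : geometric_piece k `<=` `]0, h[%classic.
Proof. by rewrite -bigcup_geometric_piece => y ?; exists k. Qed.

Lemma lebesgue_measure_geometric_piece k :
  lebesgue_measure (geometric_piece k) = (h ^+ k.+1 * (1 - h))%:E.
Proof.
have lt_piece : h ^+ k.+2 < h ^+ k.+1 by rewrite [ltLHS]exprS gtr_pMl.
by rewrite lebesgue_measure_itv /= lte_fin lt_piece -EFinB; congr _%:E; rewrite !exprS; ring.
Qed.

Lemma integral_geometric_pieces_le (f : R -> R) (b : nat -> R) :
  measurable_fun `]0, h[ f -> (forall y, `]0, h[%classic y -> 0 <= f y) ->
  (forall k y, geometric_piece k y -> f y <= b k) ->
  (\int[lebesgue_measure]_(y in `]0%R, h[) (f y)%:E
    <= \sum_(k <oo) (b k * (h ^+ k.+1 * (1 - h)))%:E)%E.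
Proof.
move=> mf f_ge0 f_le_b.
rewrite -bigcup_geometric_piece ge0_integral_bigcup //; first last.
- exact: geometric_piece_trivIset.
- by rewrite bigcup_geometric_piece => y /f_ge0; rewrite lee_fin.
- by rewrite bigcup_geometric_piece; exact/measurable_EFinP.
- by move=> k; exact: measurable_itv.
apply: lee_nneseries => [k _ _|k _].
  by apply: integral_ge0 => y /geometric_piece_sub /f_ge0; rewrite lee_fin.
rewrite EFinM -lebesgue_measure_geometric_piece -integral_cst; last exact: measurable_itv.
apply: ge0_le_integral => //.
- exact: measurable_itv.
- by move=> y /geometric_piece_sub /f_ge0; rewrite lee_fin.
- apply/measurable_EFinP.
  exact: measurable_funS (measurable_itv _) (@geometric_piece_sub k) mf.
- by move=> y /f_le_b; rewrite lee_fin.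
Qed.

Lemma geometric_piece_kernel_le k y : geometric_piece k y ->
  (y * Num.sqrt (ln y^-1))^-1 <= (h ^+ k.+2 * Num.sqrt (ln h^-1))^-1.
Proof.
rewrite /geometric_piece /= in_itv /= => /andP[lo hi].
have y0 : 0 < y := lt_le_trans (expr_gt0 _) lo.
have yh : y < h by rewrite (lt_le_trans hi) // -{2}(expr1 h) expr_le.
have ln_h_gt0 : 0 < ln h^-1 by rewrite ln_gt0 // invf_gt1.
have ln_y_gt0 : 0 < ln y^-1 by rewrite ln_gt0 // invf_gt1 // (lt_trans yh).
rewrite lef_pV2 ?posrE ?(mulr_gt0 y0) ?(mulr_gt0 (expr_gt0 _)) ?sqrtr_gt0 //.
rewrite ler_pM ?(ltW (expr_gt0 _)) ?sqrtr_ge0 // ler_sqrt ?(ltW ln_y_gt0) //.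
by rewrite ler_ln ?posrE ?invr_gt0 // lef_pV2 ?posrE // ltW.
Qed.

End geometric_pieces.

Section kernel_estimate.
Variables (R : realType) (gamma : R -> R) (d e q h : R).
Hypotheses (h0 : 0 < h) (h1 : h < 1) (q0 : 0 < q) (q1 : q < 1).
Hypothesis gamma_cont : forall x, 0 < x < d -> {for x, continuous gamma}.
Hypothesis gamma_mono : forall x y, 0 <= x -> x <= y -> y < d -> gamma x <= gamma y.
Hypothesis gamma0 : gamma 0 = 0.
Hypothesis contraction : forall z, 0 < z < e -> gamma (z * h) <= q * gamma z.

Let gamma_ge0 z : 0 <= z < d -> 0 <= gamma z.
Proof. by move=> /andP[z0 zd]; rewrite -gamma0 gamma_mono. Qed.

Let gamma_mul_ge0 x y : 0 < x < d -> 0 < y < h -> 0 <= gamma (x * y).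
Proof.
move=> /andP[x0 xd] /andP[y0 yh]; apply: gamma_ge0.
by rewrite mulr_ge0 ?(ltW x0) ?(ltW y0) //= (lt_trans _ xd) // gtr_pMr // (lt_trans yh).
Qed.

Lemma measurable_kernel_integrand x : 0 < x < d ->
  measurable_fun `]0, h[ (fun y => gamma (x * y) / (y * Num.sqrt (ln y^-1))).
Proof.
move=> /andP[x0 xd].
apply: open_continuous_measurable_fun; first exact: interval_open.
move=> y; rewrite inE /= in_itv /= => /andP[y0 yh].
have xy0 : 0 < x * y by rewrite mulr_gt0.
have xy_lt_x : x * y < x by rewrite gtr_pMr // (lt_trans yh).
have ln_y_gt0 : 0 < ln y^-1 by rewrite ln_gt0 // invf_gt1 // (lt_trans yh).
suff : {for y, continuous (fun y => gamma (x * y) / (y * Num.sqrt (ln y^-1)))} by [].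
apply: cvgM.
  apply: (@continuous_comp _ _ _ ( *%R x) gamma); first exact: mulrl_continuous.
  by apply: gamma_cont; rewrite xy0 (lt_trans xy_lt_x).
apply: cvgV; first by rewrite mulf_neq0 ?gt_eqF ?sqrtr_gt0.
apply: cvgM; first exact: cvg_id.
apply: (@cvg_comp _ _ _ (fun z => ln z^-1) Num.sqrt _ (nbhs (ln y^-1))).
  apply: continuous_comp; first by apply: inv_continuous; rewrite gt_eqF.
  by apply: continuous_ln; rewrite invr_gt0.
exact: sqrt_continuous.
Qed.

Lemma gamma_geometric_piece_le x k y : 0 < x < Num.min d e ->
  geometric_piece h k y -> gamma (x * y) <= q ^+ k * gamma x.
Proof.
rewrite lt_min => /andP[x0 /andP[xd xe]] piece_y.
have /= := geometric_piece_sub h0 h1 piece_y; rewrite in_itv /= => /andP[y0 _].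
move: piece_y; rewrite /geometric_piece /= in_itv /= => /andP[_ y_lt].
have hk_le1 : h ^+ k <= 1 by rewrite exprn_ile1 ?(ltW h0) ?(ltW h1).
have y_le_hk : y <= h ^+ k.
  by rewrite (le_trans (ltW y_lt)) // exprS ler_piMl ?exprn_ge0 ?(ltW h0) ?(ltW h1).
apply: (@le_trans _ _ (gamma (x * h ^+ k))).
  apply: gamma_mono; first by rewrite mulr_ge0 ?(ltW x0) ?(ltW y0).
    by rewrite ler_wpM2l ?(ltW x0).
  by rewrite (le_lt_trans _ xd) // ler_piMr ?(ltW x0).
have h01 : 0 < h <= 1 by rewrite h0 ltW.
by apply: (contraction_iter (ltW q0) h01 contraction); rewrite x0.
Qed.

Lemma kernel_integral_le x : 0 < x < Num.min d e ->
  (\int[lebesgue_measure]_(y in `]0%R, h[)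
      ((gamma (x * y) / (y * Num.sqrt (ln (y^-1))))%:E)
    <= ((1 - h) / (h * Num.sqrt (ln h^-1) * (1 - q)) * gamma x)%:E)%E.
Proof.
move=> x_in; have /andP[x0 xd] : 0 < x < d.
  by move: x_in; rewrite lt_min => /andP[-> /andP[]].
set s := Num.sqrt (ln h^-1).
have s0 : 0 < s by rewrite sqrtr_gt0 ln_gt0 // invf_gt1.
have gamma_x_ge0 : 0 <= gamma x by apply: gamma_ge0; rewrite (ltW x0) xd.
pose b k := q ^+ k * gamma x / (h ^+ k.+2 * s).
apply: (le_trans (integral_geometric_pieces_le h0 h1 (b := b) _ _ _)).
- by apply: measurable_kernel_integrand; rewrite x0 xd.
- move=> y /=; rewrite in_itv /= => y_in.
  have /andP[y0 _] := y_in.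
  by rewrite divr_ge0 ?gamma_mul_ge0 ?x0 // mulr_ge0 ?sqrtr_ge0 // ltW.
- move=> k y piece_y.
  have /= := geometric_piece_sub h0 h1 piece_y; rewrite in_itv /= => y_in.
  have /andP[y0 _] := y_in.
  apply: ler_pM.
  + by rewrite gamma_mul_ge0 ?x0.
  + by rewrite invr_ge0 mulr_ge0 ?sqrtr_ge0 // ltW.
  + exact: gamma_geometric_piece_le piece_y.
  + exact: geometric_piece_kernel_le piece_y.
rewrite (eq_eseriesr (g := fun k => ((1 - h) / (h * s) * gamma x * q ^+ k)%:E)).
  apply: le_trans (nneseries_geometric_le _ _) _.
  - by rewrite mulr_ge0 // divr_ge0 ?subr_ge0 ?(ltW h1) ?mulr_ge0 ?(ltW h0) ?(ltW s0).
  - by rewrite q0 q1.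
  by rewrite lee_fin le_eqVlt; apply/orP; left; apply/eqP; field; rewrite ?gt_eqF ?subr_gt0.
move=> k _; congr _%:E; rewrite /b !exprS.
by field; rewrite ?gt_eqF ?mulr_gt0 ?exprn_gt0.
Qed.

End kernel_estimate.

Theorem proposition2p8 (R : realType) (gamma : R -> R) (alpha : R) :
  admissible_near0 gamma ->
  0 < alpha <= 1 ->
  regularly_varying_at0 gamma alpha ->
  exists c : R, 0 < c /\ exists x0 : R, 0 < x0 < 1 /\
    forall x : R, 0 <= x <= x0 ->
      (\int[lebesgue_measure]_(y in `]0%R, 2^-1%R[)
          ((gamma (x * y) / (y * Num.sqrt (ln (y^-1))))%:E) <= (c * gamma x)%:E)%E.
Proof.
move=> [d [d0 [gamma_cont [gamma_mono [_ gamma0]]]]] /andP[alpha0 _] rv.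
set h : R := 2^-1.
have h01 : 0 < h < 1 by rewrite /h invr_gt0 invf_lt1 ?ltr0n ?ltr1n.
have /andP[h0 h1] := h01.
have [q [e [/andP[q0 q1] e0 contraction]]] :=
  regularly_varying_contraction alpha0 h01 rv.
exists ((1 - h) / (h * Num.sqrt (ln h^-1) * (1 - q))); split.
  by rewrite divr_gt0 ?subr_gt0 // !mulr_gt0 ?subr_gt0 ?sqrtr_gt0 ?ln_gt0 ?invf_gt1.
set m := Num.min (Num.min d e) 1.
have m0 : 0 < m by rewrite !lt_min d0 e0 ltr01.
have m1 : m <= 1 by rewrite ge_min lexx orbT.
have m_de : m <= Num.min d e by rewrite ge_min lexx.
exists (m / 2); split; first by apply/andP; split; lra.
move=> x /andP[x_ge0 x_le]; have [->|x_neq0] := eqVneq x 0.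
  under eq_integral => y _ do rewrite mul0r gamma0 mul0r.
  by rewrite integral0 gamma0 mulr0.
apply: (kernel_integral_le h0 h1 q0 q1 gamma_cont gamma_mono gamma0 contraction).
rewrite lt_neqAle eq_sym x_neq0 x_ge0 /=; lra.
Qed.
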